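(* Let $n\ge2$ and let $N$ be a monoid containing elements $s_1,\dots,s_{n-1},a$ satisfying $s_i^2=1$, $(s_is_{i+1})^3=1$ for $1\le i\le n-2$, $(s_is_j)^2=1$ for $|i-j|\ge2$, and $s_ia=as_i$ for $2\le i\le n-1$. Define $\alpha_1=a$ and $\alpha_j=(s_{j-1}\cdots s_1)a(s_1\cdots s_{j-1})$ for $2\le j\le n$, and for $1\le i\le n-1$, $1\le j\le n$ let $\alpha_j^{s_i}=\alpha_{j-1}$ if $i=j-1$, $\alpha_j^{s_i}=\alpha_{j+1}$ if $i=j$, and $\alpha_j^{s_i}=\alpha_j$ otherwise. Then $s_i\alpha_j=\alpha_j^{s_i}s_i$ in $N$ for all $1\le i\le n-1$ and $1\le j\le n$. *)

From mathcomp Require Import all_boot.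
Set Implicit Arguments. Unset Strict Implicit. Unset Printing Implicit Defensive.

(* A monoid is given explicitly by a carrier M, a multiplication mul and a
   unit one (the axioms are hypotheses of the theorem). *)
Section MonoidDefs.
Variables (M : Type) (mul : M -> M -> M) (one : M).

Fixpoint mpow (x : M) (k : nat) : M :=
  if k is k'.+1 then mul x (mpow x k') else one.

Variable s : nat -> M.  (* s i = s_i, only i in 1..n-1 matter *)
Variable a : M.

Fixpoint sdesc (k : nat) : M :=
  if k is k'.+1 then mul (s k'.+1) (sdesc k') else one.
Fixpoint sasc (k : nat) : M :=
  if k is k'.+1 then mul (sasc k') (s k'.+1) else one.

Definition alpha (j : nat) : M :=
  if j == 1 then a else mul (mul (sdesc j.-1) a) (sasc j.-1).

Definition alpha_act (i j : nat) : M :=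
  if i == j.-1 then alpha j.-1 else if i == j then alpha j.+1 else alpha j.
End MonoidDefs.

From mathcomp Require Import all_boot.
From mathcomp Require Import zify.

(* The relations make s_{j-1} ... s_1 act on s_1, ..., s_{j-2} by the index shift
   i -> i+1 (braid relation at i = j-2, far commutation otherwise) and commute with
   s_i for i > j.  Hence conjugating alpha_j by s_i either passes s_i through to a
   (which commutes with s_i for i >= 2), or, when i = j-1 or i = j, lengthens or
   shortens the two words by s_i, giving alpha_{j-1} or alpha_{j+1}. *)

Section Monoid.
Variables (M : Type) (mul : M -> M -> M) (one : M).
Hypothesis mulA : forall x y z, mul x (mul y z) = mul (mul x y) z.
Hypothesis mul1 : forall x, mul one x = x.
Hypothesis mul1r : forall x, mul x one = x.

Lemma mulKinv (x y : M) : mul x x = one -> mul x (mul x y) = y.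
Proof. by move=> xx; rewrite mulA xx mul1. Qed.

Lemma mpow2_commute (x y : M) : mul x x = one -> mul y y = one ->
  mpow mul one (mul x y) 2 = one -> mul x y = mul y x.
Proof.
move=> xx yy; rewrite /= mul1r => xy2.
by rewrite -[RHS]mul1 -{1}xy2 -!mulA mulKinv // xx mul1r.
Qed.

Lemma mpow3_braid (x y : M) : mul x x = one -> mul y y = one ->
  mpow mul one (mul x y) 3 = one -> mul x (mul y x) = mul y (mul x y).
Proof.
move=> xx yy; rewrite /= mul1r => xy3.
by rewrite -[RHS]mul1 -{1}xy3 -!mulA !mulKinv // yy mul1r.
Qed.

Section Coxeter.
Variables (n : nat) (s : nat -> M).
Hypothesis s_sqr : forall i, 1 <= i <= n - 1 -> mul (s i) (s i) = one.
Hypothesis s_commute : forall i j, 1 <= i <= n - 1 -> 1 <= j <= n - 1 ->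
  (i + 2 <= j) || (j + 2 <= i) -> mul (s i) (s j) = mul (s j) (s i).
Hypothesis s_braid : forall i, 1 <= i <= n - 2 ->
  mul (s i) (mul (s i.+1) (s i)) = mul (s i.+1) (mul (s i) (s i.+1)).

Local Notation sdesc := (sdesc mul one s).
Local Notation sasc := (sasc mul one s).

Lemma s_sdesc_commute m k : k + 2 <= m <= n - 1 ->
  mul (s m) (sdesc k) = mul (sdesc k) (s m).
Proof.
elim: k => [|k IH] hk /=; first by rewrite mul1 mul1r.
rewrite mulA (s_commute m k.+1); try lia.
by rewrite -mulA IH ?mulA //; lia.
Qed.

Lemma s_sasc_commute m k : k + 2 <= m <= n - 1 ->
  mul (s m) (sasc k) = mul (sasc k) (s m).
Proof.
elim: k => [|k IH] hk /=; first by rewrite mul1 mul1r.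
rewrite mulA IH; last by lia.
by rewrite -mulA (s_commute m k.+1) //; lia.
Qed.

Lemma s_sdesc_shift i k : 1 <= i -> i < k <= n - 1 ->
  mul (s i) (sdesc k) = mul (sdesc k) (s i.+1).
Proof.
move=> i_gt0; elim: k => [|k IH] hk //=.
have [->|k_neq_i] := eqVneq k i.
  case: i i_gt0 {IH hk} (hk) => [|i] // _ hk /=.
  rewrite !mulA -(mulA (s i.+1)) s_braid; last by lia.
  by rewrite -!mulA (s_sdesc_commute i.+2) ?mulA //; lia.
rewrite mulA (s_commute i k.+1); try lia.
by rewrite -!mulA IH //; lia.
Qed.

Lemma sasc_s_shift i k : 1 <= i -> i < k <= n - 1 ->
  mul (sasc k) (s i) = mul (s i.+1) (sasc k).
Proof.
move=> i_gt0; elim: k => [|k IH] hk //=.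
have [->|k_neq_i] := eqVneq k i.
  case: i i_gt0 {IH hk} (hk) => [|i] // _ hk /=.
  rewrite -!mulA s_braid; last by lia.
  by rewrite !mulA -(s_sasc_commute i.+2) -?mulA //; lia.
rewrite -mulA -(s_commute i k.+1); try lia.
by rewrite !mulA IH //; lia.
Qed.

Variable a : M.
Hypothesis s_a_commute : forall i, 2 <= i <= n - 1 -> mul (s i) a = mul a (s i).

Local Notation alpha := (alpha mul one s a).

Lemma alphaE j : 0 < j -> alpha j = mul (mul (sdesc j.-1) a) (sasc j.-1).
Proof. by case: j => [|[|j]] // _; rewrite /alpha /= mul1 mul1r. Qed.

Lemma s_alpha_pred j : 1 <= j <= n - 1 ->
  mul (s j) (alpha j.+1) = mul (alpha j) (s j).
Proof.
move=> hj; rewrite !alphaE //; case: j hj => [|j] hj //=.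
by rewrite -!mulA mulKinv ?s_sqr.
Qed.

Lemma s_alpha_succ j : 1 <= j <= n - 1 ->
  mul (s j) (alpha j) = mul (alpha j.+1) (s j).
Proof.
move=> hj; rewrite !alphaE //; case: j hj => [|j] hj //=.
by rewrite -!mulA s_sqr // mul1r.
Qed.

Lemma s_alpha_far i j : 1 <= i <= n - 1 -> 1 <= j <= n -> i.+1 != j -> i != j ->
  mul (s i) (alpha j) = mul (alpha j) (s i).
Proof.
move=> hi hj ij1 ij; rewrite alphaE; last by lia.
have [i_lt_j|j_lt_i] := ltnP i j.
  rewrite !mulA s_sdesc_shift; try lia.
  rewrite -(mulA _ (s i.+1)) s_a_commute; last by lia.
  by rewrite mulA -!mulA sasc_s_shift //; lia.
rewrite !mulA s_sdesc_commute; last by lia.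
rewrite -(mulA _ (s i)) s_a_commute; last by lia.
by rewrite mulA -!mulA s_sasc_commute //; lia.
Qed.

Lemma s_alpha_conj i j : 1 <= i <= n - 1 -> 1 <= j <= n ->
  mul (s i) (alpha j) = mul (alpha_act mul one s a i j) (s i).
Proof.
move=> hi hj; rewrite /alpha_act.
have [ij1|ij1] := eqVneq i j.-1.
  have -> : j = i.+1 by lia.
  exact: s_alpha_pred.
have [<-|ij] := eqVneq i j; first exact: s_alpha_succ.
by apply: s_alpha_far => //; lia.
Qed.

End Coxeter.
End Monoid.

Theorem lemma3 (M : Type) (mul : M -> M -> M) (one : M)
  (mulA : forall x y z, mul x (mul y z) = mul (mul x y) z)
  (mul1 : forall x, mul one x = x) (mul1r : forall x, mul x one = x)
  (n : nat) (hn : 2 <= n) (s : nat -> M) (a : M)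
  (hs2 : forall i, 1 <= i <= n - 1 -> mul (s i) (s i) = one)
  (hs3 : forall i, 1 <= i <= n - 2 ->
           mpow mul one (mul (s i) (s i.+1)) 3 = one)
  (hs22 : forall i j, 1 <= i <= n - 1 -> 1 <= j <= n - 1 ->
           (i + 2 <= j) || (j + 2 <= i) ->
           mpow mul one (mul (s i) (s j)) 2 = one)
  (hsa : forall i, 2 <= i <= n - 1 -> mul (s i) a = mul a (s i)) :
  forall i j, 1 <= i <= n - 1 -> 1 <= j <= n ->
    mul (s i) (alpha mul one s a j) = mul (alpha_act mul one s a i j) (s i).
Proof.
apply: s_alpha_conj => //.
- move=> i j hi hj hij.
  by apply: mpow2_commute => //; [apply: hs2 | apply: hs2 | apply: hs22].
- move=> i hi.
  by apply: mpow3_braid => //; [apply: hs2 | apply: hs2 | apply: hs3]; lia.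
Qed.
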